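(* In the bandit setting, let $\beta=\frac1K$ and run Gaptron with gap map $a(\mathbf W_t,\mathbf x_t)=1-\max\{\mathbb 1[m_t^\star>\beta],\,m_t^\star\}$, exploration rate $\gamma=\min\Big\{1,\sqrt{\frac{K^3X^2D^2}{2(1-\beta)(K-1)T}}\Big\}$, learning rate $\eta=\frac{\gamma(1-\beta)}{K^2X^2}$, and the bandit multiclass hinge loss $$\ell_t(\mathbf W)=\begin{cases}\frac{\mathbb 1[y'_t=y_t]}{p'_t(y'_t)}\max\{1-m_t(\mathbf W,y_t),0\}&\text{if } m_t^\star\le\beta,\\ \frac{\mathbb 1[y'_t=y_t]}{p'_t(y'_t)}\max\{1-m_t(\mathbf W,y_t),0\}&\text{if } y_t^\star\ne y_t\text{ and } m_t^\star>\beta,\\ 0&\text{if } y'_t=y_t^\star=y_t\text{ and } m_t^\star>\beta.\end{cases}$$ Then for every $\mathbf U\in\mathcal W$, $$\mathbb E\Big[\sum_{t=1}^T\mathbb 1[y'_t\ne y_t]\Big]\le\mathbb E\Big[\sum_{t=1}^T\ell_t(\mathbf U)\Big]+\max\Big\{\frac{K^3X^2D^2}{K-1},\ 2KXD\sqrt{\frac T2}\Big\}.$$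
   Context: Setting and notation. Fix integers $K\ge 2$, $d\ge1$, $T\ge1$ and reals $X>0$, $D>0$. Matrices $\mathbf W\in\mathbb{R}^{K\times d}$ have rows $\mathbf W^1,\dots,\mathbf W^K\in\mathbb{R}^d$ and are identified with vectors in $\mathbb{R}^{Kd}$; $\langle\cdot,\cdot\rangle$ is the Euclidean inner product and $\|\cdot\|$ the Euclidean (Frobenius) norm. $\mathcal W=\{\mathbf W:\|\mathbf W\|\le D\}$. $\mathbf e_k$ is the $k$-th standard basis vector of $\mathbb R^K$ and $\mathbf 1\in\mathbb R^K$ the all-ones vector. In each round $t=1,\dots,T$ the environment chooses a label $y_t\in\{1,\dots,K\}$ and a feature vector $\mathbf x_t\in\mathbb R^d$ with $\|\mathbf x_t\|\le X$ (possibly depending on the learner's past predictions $y'_1,\dots,y'_{t-1}$ but not on its current random draw); the learner sees $\mathbf x_t$, outputs a random label $y'_t$, and then observes $y_t$ (full-information setting) or only $\mathbb 1[y'_t\ne y_t]$ (bandit setting). Gaptron, with learning rate $\eta>0$, exploration rate $\gamma\in[0,1]$, gap map $a:\mathbb R^{K\times d}\times\mathbb R^d\to[0,1]$ and loss functions $\ell_t$: set $\mathbf W_1=\mathbf 0$; for $t=1,\dots,T$: let $y_t^\star=\arg\max_k\langle \mathbf W_t^k,\mathbf x_t\rangle$ (ties broken arbitrarily), $a_t=a(\mathbf W_t,\mathbf x_t)$, $\mathbf p'_t=(1-\max\{a_t,\gamma\})\mathbf e_{y_t^\star}+\max\{a_t,\gamma\}\frac1K\mathbf 1$; draw $y'_t\sim\mathbf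 p'_t$ ($p'_t(k)$ denotes the probability of label $k$); set $\mathbf g_t=\nabla\ell_t(\mathbf W_t)$; update $\mathbf W_{t+1}=\arg\min_{\mathbf W\in\mathcal W}\ \eta\langle\mathbf g_t,\mathbf W\rangle+\frac12\|\mathbf W-\mathbf W_t\|^2$. $\mathbb E$ denotes expectation over the learner's randomization. Margins: $m_t(\mathbf W,y)=\langle\mathbf W^y,\mathbf x_t\rangle-\max_{k\ne y}\langle\mathbf W^k,\mathbf x_t\rangle$ and $m_t^\star=\max_k m_t(\mathbf W_t,k)$, where $\mathbf W_t$ is Gaptron's current iterate; in the definition of $\ell_t$ the case distinction uses $y_t^\star$ and $m_t^\star$ computed from $\mathbf W_t$. Where $\ell_t$ is nonzero and the hinge is active, $\mathbf g_t=\frac{\mathbb 1[y'_t=y_t]}{p'_t(y'_t)}(\mathbf e_{\tilde k}-\mathbf e_{y_t})\otimes\mathbf x_t$ with $\tilde k=\arg\max_{k\ne y_t}\langle\mathbf W_t^k,\mathbf x_t\rangle$, where $\mathbf v\otimes\mathbf x$ is the $K\times d$ matrix with rows $v_k\mathbf x$. *)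

From HB Require Import structures.
From mathcomp Require Import all_boot all_order all_algebra.
From mathcomp Require Import reals.
Set Implicit Arguments. Unset Strict Implicit. Unset Printing Implicit Defensive.
Import Order.TTheory GRing.Theory Num.Theory.
Local Open Scope ring_scope.

Section Gaptron.
Variables (R : realType) (K d : nat).

Definition fmaxs (s : seq R) : R := foldr Num.max (head 0 s) s.

Definition score (W : 'M[R]_(K, d)) (x : 'rV[R]_d) (k : 'I_K) : R :=
  \sum_(j < d) W k j * x 0 j.

Definition margin (W : 'M[R]_(K, d)) (x : 'rV[R]_d) (y : 'I_K) : R :=
  score W x y - fmaxs [seq score W x k | k <- [seq k <- enum 'I_K | k != y]].

Definition mstar (W : 'M[R]_(K, d)) (x : 'rV[R]_d) : R :=
  fmaxs [seq margin W x k | k <- enum 'I_K].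

Definition frob_dot (A B : 'M[R]_(K, d)) : R := \sum_(i < K) \sum_(j < d) A i j * B i j.
Definition frob_norm (A : 'M[R]_(K, d)) : R := Num.sqrt (frob_dot A A).
Definition vnorm (x : 'rV[R]_d) : R := Num.sqrt (\sum_(j < d) x 0 j ^+ 2).

(* Tie-breaking rules for y^* = argmax_k <W^k,x> and ktilde = argmax_{k<>y} <W^k,x>;
   they may depend on the history of past predictions. *)
Definition ystar_ok (ysel : seq 'I_K -> 'M[R]_(K, d) -> 'rV[R]_d -> 'I_K) :=
  forall h W x k, score W x k <= score W x (ysel h W x).
Definition ktilde_ok (ksel : seq 'I_K -> 'M[R]_(K, d) -> 'rV[R]_d -> 'I_K -> 'I_K) :=
  forall h W x y, ksel h W x y != y /\
    forall k, k != y -> score W x k <= score W x (ksel h W x y).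

(* upd Wt g = argmin_{||W||<=D} eta <g, W> + 1/2 ||W - Wt||^2 *)
Definition upd_ok (eta D : R) (upd : 'M[R]_(K, d) -> 'M[R]_(K, d) -> 'M[R]_(K, d)) :=
  forall Wt g, frob_norm (upd Wt g) <= D /\
    forall V, frob_norm V <= D ->
      eta * frob_dot g (upd Wt g) + 2^-1 * frob_norm (upd Wt g - Wt) ^+ 2
      <= eta * frob_dot g V + 2^-1 * frob_norm (V - Wt) ^+ 2.

Variables (beta gamma : R).
Variable env : seq 'I_K -> 'I_K * 'rV[R]_d.  (* history of past predictions -> (y_t, x_t) *)
Variable ysel : seq 'I_K -> 'M[R]_(K, d) -> 'rV[R]_d -> 'I_K.
Variable ksel : seq 'I_K -> 'M[R]_(K, d) -> 'rV[R]_d -> 'I_K -> 'I_K.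
Variable upd : 'M[R]_(K, d) -> 'M[R]_(K, d) -> 'M[R]_(K, d).

Definition gap (W : 'M[R]_(K, d)) (x : 'rV[R]_d) : R :=
  1 - Num.max (if beta < mstar W x then 1 else 0) (mstar W x).

Definition prob (h : seq 'I_K) (W : 'M[R]_(K, d)) (x : 'rV[R]_d) (k : 'I_K) : R :=
  (1 - Num.max (gap W x) gamma) * (k == ysel h W x)%:R
  + Num.max (gap W x) gamma / K%:R.

Definition case3 (h : seq 'I_K) (Wt : 'M[R]_(K, d)) (x : 'rV[R]_d) (y y' : 'I_K) : bool :=
  [&& beta < mstar Wt x, y' == ysel h Wt x & ysel h Wt x == y].

Definition iw (h : seq 'I_K) (Wt : 'M[R]_(K, d)) (x : 'rV[R]_d) (y y' : 'I_K) : R :=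
  (y' == y)%:R / prob h Wt x y'.

Definition loss (h : seq 'I_K) (Wt : 'M[R]_(K, d)) (x : 'rV[R]_d) (y y' : 'I_K)
  (U : 'M[R]_(K, d)) : R :=
  if case3 h Wt x y y' then 0
  else iw h Wt x y y' * Num.max (1 - margin U x y) 0.

Definition grad (h : seq 'I_K) (Wt : 'M[R]_(K, d)) (x : 'rV[R]_d) (y y' : 'I_K)
  : 'M[R]_(K, d) :=
  if case3 h Wt x y y' then 0
  else if 0 < 1 - margin Wt x y then
    iw h Wt x y y' *:
      \matrix_(i < K, j < d) (((i == ksel h Wt x y)%:R - (i == y)%:R) * x 0 j)
  else 0.

(* W after processing the reversed history hr *)
Fixpoint Wrec (hr : seq 'I_K) : 'M[R]_(K, d) :=
  match hr with
  | [::] => 0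
  | y' :: hr' =>
      let h := rev hr' in
      upd (Wrec hr') (grad h (Wrec hr') (env h).2 (env h).1 y')
  end.

(* W_t, given the history h = [:: y'_1; ...; y'_{t-1}] *)
Definition Wof (h : seq 'I_K) : 'M[R]_(K, d) := Wrec (rev h).

Variable T : nat.

Definition traj_prob (s : T.-tuple 'I_K) : R :=
  \prod_(t < T) prob (take t s) (Wof (take t s)) (env (take t s)).2 (tnth s t).

Definition expect (F : T.-tuple 'I_K -> R) : R :=
  \sum_(s : T.-tuple 'I_K) traj_prob s * F s.

Definition mistakes (s : T.-tuple 'I_K) : R :=
  \sum_(t < T) (tnth s t != (env (take t s)).1)%:R.

Definition cumloss (U : 'M[R]_(K, d)) (s : T.-tuple 'I_K) : R :=
  \sum_(t < T) loss (take t s) (Wof (take t s)) (env (take t s)).2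
                    (env (take t s)).1 (tnth s t) U.

End Gaptron.

Definition betaK (R : realType) (K : nat) : R := K%:R^-1.
Definition gammaT (R : realType) (K T : nat) (X D : R) : R :=
  Num.min 1 (Num.sqrt ((K%:R ^+ 3 * X ^+ 2 * D ^+ 2) /
                       (2 * (1 - betaK R K) * (K%:R - 1) * T%:R))).
Definition etaT (R : realType) (K T : nat) (X D : R) : R :=
  gammaT K T X D * (1 - betaK R K) / (K%:R ^+ 2 * X ^+ 2).

(* Write W_t for the iterates, g_t for the importance-weighted gradients and
   Phi(W) = ||W - U||^2 / (2 eta) for the potential.  Three facts combine:
   - projected gradient step: <g, W_t - U> <= Phi(W_t) - Phi(W_(t+1)) + eta/2 ||g||^2;
   - subgradient inequality:  ell_t(W_t) + <g_t, U - W_t> <= ell_t(U);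
   - per-round inequality: conditionally on the history,
       E[1[y'_t <> y_t] - ell_t(W_t) + eta/2 ||g_t||^2] <= gamma (1 - beta),
     which is where the gap map, beta = 1/K and the choice of eta enter.
   Summing the first two along a trajectory telescopes Phi, so that
   mistakes <= cumloss(U) + Phi(0) + (sum of the per-round slacks); taking
   expectations with the third gives E[mistakes] <= E[cumloss(U)] +
   D^2/(2 eta) + T gamma (1 - beta), and the tuned gamma balances the last
   two terms. *)
From HB Require Import structures.
From mathcomp Require Import all_boot all_order all_algebra.
From mathcomp Require Import reals.
From mathcomp Require Import ring lra.
Import Order.TTheory GRing.Theory Num.Theory.
Local Open Scope ring_scope.
Set Implicit Arguments. Unset Strict Implicit.

(* Trajectories of length n.+1 are trajectories of length n extended by one
   prediction; this is the induction step for all expectations below. *)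
Section TupleRcons.
Variables (T : eqType) (n : nat).

Definition split_last (u : n.+1.-tuple T) : n.-tuple T * T :=
  ([tuple tnth u (widen_ord (leqnSn n) i) | i < n], tnth u ord_max).

Lemma tnth_rcons_tuple (s : n.-tuple T) y (t : 'I_n) :
  tnth (rcons_tuple s y) (widen_ord (leqnSn n) t) = tnth s t.
Proof. by rewrite !(tnth_nth y) /= nth_rcons size_tuple ltn_ord. Qed.

Lemma tnth_rcons_tuple_max (s : n.-tuple T) y :
  tnth (rcons_tuple s y) ord_max = y.
Proof. by rewrite (tnth_nth y) /= nth_rcons size_tuple ltnn eqxx. Qed.

Lemma take_rcons_tuple (s : n.-tuple T) y (t : 'I_n) :
  take (widen_ord (leqnSn n) t) (rcons_tuple s y) = take t s.
Proof. by rewrite /= -cats1 takel_cat // size_tuple ltnW. Qed.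

Lemma take_rcons_tuple_max (s : n.-tuple T) y :
  take (@ord_max n) (rcons_tuple s y) = s.
Proof.
have size_s : size s = n := size_tuple s.
by rewrite /= -cats1 takel_cat ?size_s // -{1}size_s take_size.
Qed.

Lemma split_lastK : cancel split_last (fun p => rcons_tuple p.1 p.2).
Proof.
move=> u; apply: eq_from_tnth => i; have z := tnth u ord_max.
rewrite (tnth_nth z) [RHS](tnth_nth z) /= nth_rcons size_tuple.
case: ltnP => [lt_in | ge_in]; last first.
  rewrite card_ord in ge_in *.
  have -> : nat_of_ord i = n by apply/eqP; rewrite eqn_leq ge_in -ltnS ltn_ord.
  by rewrite eqxx (tnth_nth z).
rewrite card_ord in lt_in; rewrite (nth_map (Ordinal lt_in)) ?size_enum_ord // (tnth_nth z).
by rewrite /= nth_enum_ord.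
Qed.

Lemma rcons_tupleK : cancel (fun p : n.-tuple T * T => rcons_tuple p.1 p.2) split_last.
Proof.
move=> [s y]; rewrite /split_last tnth_rcons_tuple_max; congr pair.
by apply: eq_from_tnth => i; rewrite tnth_mktuple tnth_rcons_tuple.
Qed.

End TupleRcons.

Lemma sum_tuple_rcons (R : nmodType) (T : finType) n (F : n.+1.-tuple T -> R) :
  \sum_(u : n.+1.-tuple T) F u = \sum_(s : n.-tuple T) \sum_(y : T) F (rcons_tuple s y).
Proof.
rewrite pair_big /= (reindex (fun p : n.-tuple T * T => rcons_tuple p.1 p.2)) //.
by exists (@split_last T n) => u _; [apply: rcons_tupleK | apply: split_lastK].
Qed.

(* The trajectory probability
   factorises round by round, so the expectation of a sum of per-round
   quantities is bounded by n times a bound on their conditional means. *)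
Section Expectation.
Variables (R : realType) (K d : nat) (beta gamma : R).
Variable env : seq 'I_K -> 'I_K * 'rV[R]_d.
Variable ysel : seq 'I_K -> 'M[R]_(K, d) -> 'rV[R]_d -> 'I_K.
Variable ksel : seq 'I_K -> 'M[R]_(K, d) -> 'rV[R]_d -> 'I_K -> 'I_K.
Variable upd : 'M[R]_(K, d) -> 'M[R]_(K, d) -> 'M[R]_(K, d).
Hypothesis K_gt0 : (0 < K)%N.
Hypothesis gamma_ge0 : 0 <= gamma.
Hypothesis gamma_le1 : gamma <= 1.

Lemma explore_rate_bounds (W : 'M[R]_(K, d)) x :
  0 <= Num.max (gap beta W x) gamma <= 1.
Proof.
rewrite le_max gamma_ge0 orbT ge_max gamma_le1 andbT /= /gap lerBlDr lerDl.
by case: ifP => _; rewrite le_max ?ler01 ?lexx.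
Qed.

Lemma prob_ge0 h W x k : 0 <= prob beta gamma ysel h W x k.
Proof.
have /andP[G0 G1] := explore_rate_bounds W x.
by apply: addr_ge0; [apply: mulr_ge0 | apply: divr_ge0]; rewrite ?subr_ge0 ?ler0n.
Qed.

Lemma prob_sum h W x : \sum_k prob beta gamma ysel h W x k = 1.
Proof.
rewrite /prob big_split /= -mulr_sumr sumr_const card_ord.
rewrite (bigD1 (ysel h W x)) //= eqxx big1 ?addr0 => [|i /negbTE -> //].
have K_neq0 : K%:R != 0 :> R by rewrite pnatr_eq0 -lt0n.
by rewrite mulr1 -[_ *+ K]mulr_natr divfK // subrK.
Qed.

Definition pred_prob h y :=
  prob beta gamma ysel h (Wof beta gamma env ysel ksel upd h) (env h).2 y.

Notation tprob := (traj_prob beta gamma env ysel ksel upd).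

Lemma traj_prob_rcons n (s : n.-tuple 'I_K) y :
  tprob (rcons_tuple s y) = tprob s * pred_prob s y.
Proof.
rewrite /traj_prob big_ord_recr /= take_rcons_tuple_max tnth_rcons_tuple_max.
by congr (_ * _); apply: eq_bigr => t _; rewrite take_rcons_tuple tnth_rcons_tuple.
Qed.

Lemma traj_prob_ge0 n (s : n.-tuple 'I_K) : 0 <= tprob s.
Proof. by apply: prodr_ge0 => t _; apply: prob_ge0. Qed.

Lemma traj_prob_sum n : \sum_(s : n.-tuple 'I_K) tprob s = 1.
Proof.
elim: n => [|n IH].
  rewrite (eq_bigr (fun _ => 1)) => [|s _]; last by rewrite /traj_prob big_ord0.
  by rewrite sumr_const card_tuple expn0.
rewrite sum_tuple_rcons -{}IH; apply: eq_bigr => s _.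
by under eq_bigr do rewrite traj_prob_rcons; rewrite -mulr_sumr prob_sum mulr1.
Qed.

Definition round_sum (f : seq 'I_K -> 'I_K -> R) n (s : n.-tuple 'I_K) :=
  \sum_(t < n) f (take t s) (tnth s t).

Lemma round_sum_rcons f n (s : n.-tuple 'I_K) y :
  round_sum f (rcons_tuple s y) = round_sum f s + f s y.
Proof.
rewrite /round_sum big_ord_recr /= take_rcons_tuple_max tnth_rcons_tuple_max.
by congr (_ + _); apply: eq_bigr => t _; rewrite take_rcons_tuple tnth_rcons_tuple.
Qed.

Lemma expect_round_sum_le f c n :
  (forall h, \sum_y pred_prob h y * f h y <= c) ->
  \sum_(s : n.-tuple 'I_K) tprob s * round_sum f s <= n%:R * c.
Proof.
move=> f_mean_le; elim: n => [|n IH].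
  by rewrite big1 ?mul0r // => s _; rewrite /round_sum big_ord0 mulr0.
have step (s : n.-tuple 'I_K) : \sum_y tprob (rcons_tuple s y) * round_sum f (rcons_tuple s y)
    = tprob s * round_sum f s + tprob s * \sum_y pred_prob s y * f s y.
  under eq_bigr do rewrite traj_prob_rcons round_sum_rcons -mulrA mulrDr.
  by rewrite -mulr_sumr big_split /= -mulr_suml prob_sum mul1r mulrDr.
rewrite sum_tuple_rcons (eq_bigr _ (fun s _ => step s)) big_split /= mulrSr mulrDl.
apply: lerD => //; rewrite -(traj_prob_sum n) mulr_suml.
by apply: ler_sum => s _; apply: ler_wpM2l; [apply: traj_prob_ge0 | apply: f_mean_le].
Qed.

End Expectation.

Section Frobenius.
Variables (R : realType) (K d : nat).
Notation M := 'M[R]_(K, d).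
Notation dot := (@frob_dot R K d).

Lemma dotC (a b : M) : dot a b = dot b a.
Proof. by apply: eq_bigr => i _; apply: eq_bigr => j _; rewrite mulrC. Qed.

Lemma dotDl (a b c : M) : dot (a + b) c = dot a c + dot b c.
Proof.
rewrite /frob_dot -big_split; apply: eq_bigr => i _.
by rewrite -big_split; apply: eq_bigr => j _; rewrite !mxE mulrDl.
Qed.

Lemma dotZl l (a b : M) : dot (l *: a) b = l * dot a b.
Proof.
rewrite /frob_dot mulr_sumr; apply: eq_bigr => i _.
by rewrite mulr_sumr; apply: eq_bigr => j _; rewrite !mxE mulrA.
Qed.

Lemma dotNl (a b : M) : dot (- a) b = - dot a b.
Proof. by rewrite -scaleN1r dotZl mulN1r. Qed.

Lemma dotDr (a b c : M) : dot c (a + b) = dot c a + dot c b.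
Proof. by rewrite dotC dotDl !(dotC c). Qed.

Lemma dotZr l (a b : M) : dot b (l *: a) = l * dot b a.
Proof. by rewrite dotC dotZl dotC. Qed.

Lemma dotNr (a b : M) : dot b (- a) = - dot b a.
Proof. by rewrite dotC dotNl dotC. Qed.

Lemma dot0l (b : M) : dot 0 b = 0.
Proof. by rewrite -(scale0r 0) dotZl mul0r. Qed.

Lemma dot_ge0 (a : M) : 0 <= dot a a.
Proof. by apply: sumr_ge0 => i _; apply: sumr_ge0 => j _; rewrite -expr2 sqr_ge0. Qed.

Lemma frob_norm_sqr (a : M) : frob_norm a ^+ 2 = dot a a.
Proof. by rewrite sqr_sqrtr // dot_ge0. Qed.

Lemma frob_norm_le (a : M) D : 0 <= D -> (frob_norm a <= D) = (dot a a <= D ^+ 2).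
Proof.
move=> D_ge0; rewrite /frob_norm -{1}(ger0_norm D_ge0) -sqrtr_sqr ler_sqrt //.
by rewrite exprn_ge0.
Qed.

Lemma ball_convex D (a c : M) l : 0 <= l <= 1 ->
  dot a a <= D ^+ 2 -> dot c c <= D ^+ 2 ->
  dot (a + l *: (c - a)) (a + l *: (c - a)) <= D ^+ 2.
Proof.
move=> /andP[l_ge0 l_le1] a_in c_in.
have -> : dot (a + l *: (c - a)) (a + l *: (c - a)) =
    (1 - l) * dot a a + l * dot c c - l * (1 - l) * dot (c - a) (c - a).
  by rewrite !(dotDl, dotDr, dotZl, dotZr, dotNl, dotNr) (dotC c a); ring.
have l1_ge0 : 0 <= 1 - l by rewrite subr_ge0.
have := mulr_ge0 (mulr_ge0 l_ge0 l1_ge0) (dot_ge0 (c - a)).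
have := ler_wpM2l l_ge0 c_in; have := ler_wpM2l l1_ge0 a_in.
lra.
Qed.

Lemma ge0_of_small_steps (A B : R) : 0 <= B ->
  (forall l, 0 < l -> l <= 1 -> 0 <= A + l * B) -> 0 <= A.
Proof.
move=> B_ge0 steps; rewrite leNgt; apply/negP => A_lt0.
have [B_ge | B_lt] := leP (- A) B; last by have := steps 1 ltr01 (lexx _); lra.
have B_gt0 : 0 < B by lra.
have l_gt0 : 0 < - A / (2 * B) by rewrite divr_gt0 ?mulr_gt0 ?oppr_gt0.
have l_le1 : - A / (2 * B) <= 1 by rewrite ler_pdivrMr ?mulr_gt0 // mul1r; lra.
have := steps _ l_gt0 l_le1.
have -> : - A / (2 * B) * B = - A / 2 by field; rewrite gt_eqF.
lra.
Qed.

(* First-order optimality of the projected step W' = upd W g: the vector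
   eta g + (W' - W) makes a non-obtuse angle with every direction into the ball. *)
Lemma proj_optimality eta D upd (W g V : M) :
  0 <= D -> upd_ok eta D upd -> frob_norm V <= D ->
  0 <= eta * dot g (V - upd W g) + dot (upd W g - W) (V - upd W g).
Proof.
move=> D_ge0 /(_ W g) [W'_in W'_min] V_in.
rewrite frob_norm_le // in W'_in; rewrite frob_norm_le // in V_in.
set W' := upd W g in W'_in W'_min *.
set a := W' - W; set b := V - W'.
apply: (@ge0_of_small_steps _ (dot b b / 2)); first by rewrite divr_ge0 ?dot_ge0.
move=> l l_gt0 l_le1.
have step_in : frob_norm (W' + l *: b) <= D.
  by rewrite frob_norm_le //; apply: ball_convex; rewrite ?(ltW l_gt0) ?l_le1.
have := W'_min _ step_in.
have -> : W' + l *: b - W = a + l *: b by rewrite addrAC.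
rewrite -/a; clearbody a b.
rewrite !frob_norm_sqr !(dotDl, dotDr, dotZl, dotZr) (dotC b a) => le_step.
rewrite -(pmulr_rge0 _ l_gt0); lra.
Qed.

Lemma proj_step eta D upd (W g U : M) :
  0 < eta -> 0 <= D -> upd_ok eta D upd -> frob_norm U <= D ->
  dot g (W - U) <=
    (dot (W - U) (W - U) - dot (upd W g - U) (upd W g - U)) / (2 * eta)
    + eta / 2 * dot g g.
Proof.
move=> eta_gt0 D_ge0 upd_min U_in.
have opt := proj_optimality W g D_ge0 upd_min U_in.
set W' := upd W g in opt *.
have -> : W - U = - ((W' - W) + (U - W')) by rewrite opprD !opprB addrA subrK.
have -> : W' - U = - (U - W') by rewrite opprB.
have sq_ge0 := dot_ge0 ((W' - W) + eta *: g).
move: opt sq_ge0; set a := W' - W; set b := U - W'; clearbody a b.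
rewrite !(dotNl, dotNr, dotDl, dotDr, dotZl, dotZr) (dotC b a) (dotC a g).
move=> opt sq_ge0.
have -> : eta / 2 * dot g g = eta * eta * dot g g / (2 * eta).
  by field; rewrite gt_eqF.
rewrite -mulrDl ler_pdivlMr ?mulr_gt0 //.
nra.
Qed.

End Frobenius.

Section Margins.
Variables (R : realType) (K d : nat).
Notation M := 'M[R]_(K, d).

Lemma foldr_max_ub (c : R) s :
  c <= foldr Num.max c s /\ forall z, z \in s -> z <= foldr Num.max c s.
Proof.
elim: s => [|a s [c_le s_le]] /=; first by split=> // z.
split; first by rewrite le_max c_le orbT.
move=> z; rewrite inE => /orP[/eqP -> | zs]; first by rewrite le_max lexx.
by rewrite le_max s_le ?orbT.
Qed.

Lemma foldr_max_mem (c : R) s : foldr Num.max c s \in c :: s.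
Proof.
elim: s => [|a s IH] /=; first by rewrite inE eqxx.
rewrite maxEle; case: ifP => _; last by rewrite !inE eqxx orbT.
by move: IH; rewrite !inE => /orP[->|->]; rewrite ?orbT.
Qed.

Lemma fmaxs_ub (s : seq R) z : z \in s -> z <= fmaxs s.
Proof. by move=> zs; have [_ ->] := foldr_max_ub (head 0 s) s. Qed.

Lemma fmaxs_mem (s : seq R) z : z \in s -> fmaxs s \in s.
Proof.
case: s => [//|a s] _; have := foldr_max_mem a (a :: s).
by rewrite /fmaxs /= inE => /orP[/eqP ->|]; rewrite ?inE ?eqxx.
Qed.

Lemma margin_le (W : M) x y k : k != y -> margin W x y <= score W x y - score W x k.
Proof.
move=> ky; rewrite /margin lerB // fmaxs_ub //.
by apply: map_f; rewrite mem_filter ky mem_enum.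
Qed.

Lemma mstar_ge (W : M) x k : margin W x k <= mstar W x.
Proof. by apply: fmaxs_ub; apply: map_f; rewrite mem_enum. Qed.

Lemma mstar_attained (W : M) x (k0 : 'I_K) : exists k, mstar W x = margin W x k.
Proof.
have k0_in : margin W x k0 \in [seq margin W x k | k <- enum 'I_K].
  by apply: map_f; rewrite mem_enum.
by have /mapP[k _ mstar_eq] := fmaxs_mem k0_in; exists k.
Qed.

Variable ysel : seq 'I_K -> M -> 'rV[R]_d -> 'I_K.
Variable ksel : seq 'I_K -> M -> 'rV[R]_d -> 'I_K -> 'I_K.
Hypothesis ysel_max : ystar_ok ysel.
Hypothesis ksel_max : ktilde_ok ksel.

Lemma margin_ksel (h : seq 'I_K) (W : M) x y :
  margin W x y = score W x y - score W x (ksel h W x y).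
Proof.
have [k_neq k_max] := ksel_max h W x y.
apply/eqP; rewrite eq_le margin_le //= /margin lerB //.
have k_in : score W x (ksel h W x y) \in
    [seq score W x k | k <- [seq k <- enum 'I_K | k != y]].
  by apply: map_f; rewrite mem_filter k_neq mem_enum.
have /mapP[k] := fmaxs_mem k_in.
by rewrite mem_filter => /andP[ky _] ->; apply: k_max.
Qed.

Lemma mstar_ge0 (h : seq 'I_K) (W : M) x : 0 <= mstar W x.
Proof.
apply: le_trans (mstar_ge W x (ysel h W x)).
by rewrite (margin_ksel h) subr_ge0 ysel_max.
Qed.

Lemma margin_not_ystar (h : seq 'I_K) (W : M) x y :
  y != ysel h W x -> margin W x y <= - mstar W x.
Proof.
move=> y_neq; have [k ->] := mstar_attained W x y.
have ystar_neq : ysel h W x != y by rewrite eq_sym.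
have := margin_le W x ystar_neq; have := ysel_max h W x y.
have [-> | k_neq] := eqVneq k (ysel h W x); first by have := margin_le W x y_neq; lra.
have ystar_neq_k : ysel h W x != k by rewrite eq_sym.
by have := margin_le W x ystar_neq_k; have := ysel_max h W x k; lra.
Qed.

End Margins.

(* The hinge loss is convex in U: on its active part the gradient is the
   importance weight times the direction (e_k - e_y) (x) x, whose inner product
   with U is a difference of scores. *)
Section LossGradient.
Variables (R : realType) (K d : nat).
Notation M := 'M[R]_(K, d).

Definition hinge_dir (k y : 'I_K) (x : 'rV[R]_d) : M :=
  \matrix_(i < K, j < d) (((i == k)%:R - (i == y)%:R) * x 0 j).

Lemma dot_hinge_dir k y x (U : M) :
  frob_dot (hinge_dir k y x) U = score U x k - score U x y.
Proof.
have sum_ind (c : 'I_K) (F : 'I_K -> R) : \sum_i (i == c)%:R * F i = F c.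
  by rewrite (bigD1 c) //= eqxx mul1r big1 ?addr0 // => i /negbTE ->; rewrite mul0r.
rewrite /frob_dot /score.
under eq_bigr => i _.
  rewrite (eq_bigr (fun j => ((i == k)%:R - (i == y)%:R) * (U i j * x 0 j))); last first.
    by move=> j _; rewrite mxE; ring.
  rewrite -mulr_sumr mulrBl.
  over.
by rewrite sumrB !sum_ind.
Qed.

Lemma dot_hinge_dir_self k y x : k != y ->
  frob_dot (hinge_dir k y x) (hinge_dir k y x) = 2 * \sum_j x 0 j ^+ 2.
Proof.
move=> k_neq; rewrite dot_hinge_dir /score -sumrB mulr_sumr; apply: eq_bigr => j _.
by rewrite !mxE eqxx (negbTE k_neq) eq_sym (negbTE k_neq) eqxx /=; ring.
Qed.

Lemma scoreB (U W : M) x k : score (U - W) x k = score U x k - score W x k.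
Proof. by rewrite /score -sumrB; apply: eq_bigr => j _; rewrite !mxE mulrBl. Qed.

Variables (beta gamma : R).
Variable ysel : seq 'I_K -> M -> 'rV[R]_d -> 'I_K.
Variable ksel : seq 'I_K -> M -> 'rV[R]_d -> 'I_K -> 'I_K.
Hypothesis ksel_max : ktilde_ok ksel.
Hypothesis gamma_ge0 : 0 <= gamma.
Hypothesis gamma_le1 : gamma <= 1.

Lemma iw_ge0 h (W : M) x y y' : 0 <= iw beta gamma ysel h W x y y'.
Proof. by rewrite /iw divr_ge0 ?ler0n ?prob_ge0. Qed.

Lemma grad_hinge_dir h (W : M) x y y' :
  grad beta gamma ysel ksel h W x y y' =
  if case3 beta ysel h W x y y' then 0
  else if 0 < 1 - margin W x y then iw beta gamma ysel h W x y y' *: hinge_dir (ksel h W x y) y x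
  else 0.
Proof. by []. Qed.

Lemma loss_subgradient h (W U : M) x y y' :
  loss beta gamma ysel h W x y y' W + frob_dot (grad beta gamma ysel ksel h W x y y') (U - W)
  <= loss beta gamma ysel h W x y y' U.
Proof.
rewrite grad_hinge_dir /loss; case: ifP => _; first by rewrite dot0l addr0.
have w_ge0 := iw_ge0 h W x y y'; set w := iw _ _ _ _ _ _ _ _ in w_ge0 *.
have hinge_ge : 1 - margin U x y <= Num.max (1 - margin U x y) 0 by rewrite le_max lexx.
case: ifP => [active | /negbT inactive].
  have [k_neq _] := ksel_max h W x y.
  have := margin_le U x k_neq.
  rewrite dotZl dot_hinge_dir max_l ?(ltW active) // (margin_ksel ksel_max h W) !scoreB.
  by move=> ?; rewrite -mulrDr; apply: ler_wpM2l => //; lra.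
rewrite dot0l addr0 max_r ?mulr0; last by rewrite leNgt.
by rewrite mulr_ge0 // le_max lexx orbT.
Qed.

End LossGradient.

(* With u = 1/K, p the
   probability of predicting the true label, m^* the largest margin, m the
   margin of the true label and xi = eta ||x||^2, the expected slack of a
   round equals m - p + xi / p; it is at most gamma (1 - u) in each of the
   three regimes of the gap map. *)
Section SlackArith.
Variable R : realFieldType.

Definition slack_params (u gamma xi : R) :=
  [/\ 0 < u, 2 * u <= 1, 0 < gamma, gamma <= 1 & xi <= gamma * (1 - u) * u ^+ 2].

(* large maximal margin, true label not predicted: p = gamma u *)
Lemma slack_arith_confident u gamma xi mstar m : slack_params u gamma xi ->
  u < mstar -> m <= - mstar ->
  m - gamma * u + xi / (gamma * u) <= gamma * (1 - u).
Proof.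
case=> u_gt0 u_le_half gamma_gt0 gamma_le1 xi_le u_lt m_le.
have xi_div : xi / (gamma * u) <= (1 - u) * u.
  rewrite ler_pdivrMr ?mulr_gt0 //.
  by have -> : (1 - u) * u * (gamma * u) = gamma * (1 - u) * u ^+ 2 by ring.
have : 0 <= gamma * (1 - u) by apply: mulr_ge0; lra.
have : 0 <= gamma * u by apply: mulr_ge0; lra.
have : 0 <= u * u by apply: mulr_ge0; lra.
lra.
Qed.

(* small maximal margin, true label predicted: p = 1 - G + G u *)
Lemma slack_arith_predicted u gamma xi mstar m G : slack_params u gamma xi ->
  0 <= mstar -> mstar <= u -> m <= mstar -> G = Num.max (1 - mstar) gamma ->
  m - (1 - G + G * u) + xi / (1 - G + G * u) <= gamma * (1 - u).
Proof.
case=> u_gt0 u_le_half gamma_gt0 gamma_le1 xi_le m_ge0 m_le_u m_le G_def.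
have G_le1 : G <= 1 by rewrite G_def ge_max gamma_le1 andbT; lra.
have p_ge_u : u <= 1 - G + G * u.
  have : 0 <= (1 - G) * (1 - u) by apply: mulr_ge0; lra.
  lra.
have c_ge0 : 0 <= gamma * (1 - u) * u by apply: mulr_ge0; [apply: mulr_ge0|]; lra.
have xi_div : xi / (1 - G + G * u) <= gamma * (1 - u) * u.
  rewrite ler_pdivrMr; last lra.
  have := ler_wpM2l c_ge0 p_ge_u; lra.
have c_le : gamma * (1 - u) * u <= gamma * (1 - u).
  by rewrite ler_piMr //; [apply: mulr_ge0|]; lra.
move: G_def; have [le_gamma | gt_gamma] := leP (1 - mstar) gamma => G_def.
  have gu_le1 : gamma * u <= 1 by rewrite -[1]mul1r ler_pM //; lra.
  have u_le1 : 0 <= 1 - u by lra.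
  have := ler_wpM2l u_le1 gu_le1.
  subst G; lra.
have : 0 <= (1 - mstar) * u by apply: mulr_ge0; lra.
subst G; lra.
Qed.

(* small maximal margin, true label not predicted: p = G u with G >= gamma *)
Lemma slack_arith_unpredicted u gamma xi mstar m G : slack_params u gamma xi ->
  0 <= mstar -> m <= - mstar -> 1 - mstar <= G -> gamma <= G ->
  m - G * u + xi / (G * u) <= gamma * (1 - u).
Proof.
case=> u_gt0 u_le_half gamma_gt0 gamma_le1 xi_le m_ge0 m_le G_ge G_ge_gamma.
have xi_div : xi / (G * u) <= (1 - u) * u.
  rewrite ler_pdivrMr ?mulr_gt0 //; last exact: lt_le_trans G_ge_gamma.
  have c_ge0 : 0 <= (1 - u) * u ^+ 2 by apply: mulr_ge0; rewrite ?sqr_ge0; lra.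
  have := ler_wpM2r c_ge0 G_ge_gamma; lra.
have : 0 <= (G - (1 - mstar)) * u by apply: mulr_ge0; lra.
have : 0 <= mstar * (1 - u) by apply: mulr_ge0; lra.
have : 0 <= gamma * (1 - u) by apply: mulr_ge0; lra.
have : 0 <= u * u by apply: mulr_ge0; lra.
lra.
Qed.

End SlackArith.

Section Round.
Variables (R : realType) (K d : nat) (X gamma : R).
Notation M := 'M[R]_(K, d).
Hypothesis K_ge2 : (2 <= K)%N.
Hypothesis gamma_gt0 : 0 < gamma.
Hypothesis gamma_le1 : gamma <= 1.
Variable ysel : seq 'I_K -> M -> 'rV[R]_d -> 'I_K.
Variable ksel : seq 'I_K -> M -> 'rV[R]_d -> 'I_K -> 'I_K.
Hypothesis ysel_max : ystar_ok ysel.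
Hypothesis ksel_max : ktilde_ok ksel.

Notation beta := (betaK R K).
Notation eta := (gamma * (1 - betaK R K) / (K%:R ^+ 2 * X ^+ 2)).
Notation pr := (prob (betaK R K) gamma ysel).

Lemma K_gt0 : (0 < K)%N. Proof. exact: leq_trans K_ge2. Qed.

Lemma beta_params : 0 < beta /\ 2 * beta <= 1.
Proof.
have K2 : 2 <= K%:R :> R by rewrite (ler_nat R 2 K).
have K_pos : 0 < K%:R :> R by apply: lt_le_trans K2.
by split; [rewrite invr_gt0 | rewrite ler_pdivrMr // mul1r].
Qed.

Definition round_slack h (W : M) x y y' :=
  (y' != y)%:R - loss beta gamma ysel h W x y y' W
  + eta / 2 * frob_dot (grad beta gamma ysel ksel h W x y y')
                       (grad beta gamma ysel ksel h W x y y').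

Lemma explore_rate_confident (W : M) x :
  beta < mstar W x -> Num.max (gap beta W x) gamma = gamma.
Proof.
move=> conf; rewrite max_r // /gap conf.
by rewrite (le_trans _ (ltW gamma_gt0)) // subr_le0 le_max lexx.
Qed.

Lemma explore_rate_unsure (h : seq 'I_K) (W : M) x : mstar W x <= beta ->
  Num.max (gap beta W x) gamma = Num.max (1 - mstar W x) gamma.
Proof.
move=> unsure; have m_ge0 := mstar_ge0 ysel_max ksel_max h W x.
by rewrite /gap ltNge unsure /= (max_r m_ge0).
Qed.

Lemma prob_gt0 (h : seq 'I_K) (W : M) x k : 0 < pr h W x k.
Proof.
have /andP[_ G_le1] : 0 <= Num.max (gap beta W x) gamma <= 1.
  by apply: explore_rate_bounds => //; apply: ltW.
have G_ge : gamma <= Num.max (gap beta W x) gamma by rewrite le_max lexx orbT.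
rewrite /prob ltr_wpDl ?mulr_ge0 ?ler0n ?subr_ge0 // divr_gt0 ?ltr0n ?K_gt0 //.
exact: lt_le_trans G_ge.
Qed.

Lemma slack_mistake h (W : M) x y y' : y' != y -> round_slack h W x y y' = 1.
Proof.
move=> y'_neq; have iw0 : iw beta gamma ysel h W x y y' = 0 by rewrite /iw (negbTE y'_neq) mul0r.
rewrite /round_slack /loss grad_hinge_dir iw0 mul0r scale0r y'_neq.
by case: ifP => _; [|case: ifP => _]; rewrite dot0l mulr0 subr0 addr0.
Qed.

Lemma expected_slack h (W : M) x y :
  \sum_y' pr h W x y' * round_slack h W x y y'
  = 1 - pr h W x y + pr h W x y * round_slack h W x y y.
Proof.
have := prob_sum beta gamma ysel K_gt0 h W x; rewrite (bigD1 y) //= => sum1.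
rewrite (bigD1 y) //= addrC; congr (_ + _).
under eq_bigr => y' y'_neq do rewrite slack_mistake // mulr1.
by rewrite -sum1 addrC addrK.
Qed.

Lemma hinge_active h (W : M) x y :
  ~~ case3 beta ysel h W x y y -> 0 < 1 - margin W x y.
Proof.
move=> not_c3; have [beta_gt0 beta_le] := beta_params.
have m_ge0 := mstar_ge0 ysel_max ksel_max h W x.
have [y_pred | y_neq] := eqVneq y (ysel h W x).
  move: not_c3; rewrite /case3 -y_pred eqxx !andbT -leNgt => unsure.
  by have := mstar_ge W x y; lra.
by have := margin_not_ystar ysel_max y_neq; lra.
Qed.

Lemma slack_correct h (W : M) x y :
  ~~ case3 beta ysel h W x y y ->
  pr h W x y * round_slack h W x y y
  = margin W x y - 1 + eta * (\sum_j x 0 j ^+ 2) / pr h W x y.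
Proof.
move=> not_c3; have active := hinge_active not_c3.
have [k_neq _] := ksel_max h W x y; have p_neq0 := lt0r_neq0 (prob_gt0 h W x y).
rewrite /round_slack /loss grad_hinge_dir (negbTE not_c3) active dotZl dotZr.
rewrite dot_hinge_dir_self // /iw eqxx max_l ?(ltW active) //=.
move: (gamma * _ / _) => eta; by field.
Qed.

Lemma slack_params_round (x : 'rV[R]_d) : 0 < X -> vnorm x <= X ->
  slack_params beta gamma (eta * \sum_j x 0 j ^+ 2).
Proof.
move=> X_gt0 x_le; have [beta_gt0 beta_le] := beta_params.
split=> //; have K_neq0 : K%:R != 0 :> R by rewrite pnatr_eq0 -lt0n K_gt0.
have S_ge0 : 0 <= \sum_j x 0 j ^+ 2 by apply: sumr_ge0 => j _; apply: sqr_ge0.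
have S_le : \sum_j x 0 j ^+ 2 <= X ^+ 2.
  rewrite -(sqr_sqrtr S_ge0) lerXn2r ?nnegrE ?sqrtr_ge0 ?(ltW X_gt0) //; exact: x_le.
have -> : eta = gamma * (1 - beta) * beta ^+ 2 / X ^+ 2.
  by rewrite /betaK; field; rewrite K_neq0 gt_eqF.
rewrite mulrAC ler_pdivrMr ?exprn_gt0 // ler_wpM2l //.
have gamma_ge0 := ltW gamma_gt0.
by apply: mulr_ge0; [apply: mulr_ge0 | apply: sqr_ge0]; lra.
Qed.

(* Per-round bound (conditional on the history): a confident correct
   prediction costs exactly the forced exploration gamma (1 - beta); otherwise
   the expected slack is m - p + eta ||x||^2 / p, bounded regime by regime. *)
Lemma round_bound h (W : M) x y : 0 < X -> vnorm x <= X ->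
  \sum_y' pr h W x y' * round_slack h W x y y' <= gamma * (1 - beta).
Proof.
move=> X_gt0 x_le; rewrite expected_slack.
have params := slack_params_round X_gt0 x_le.
have m_ge0 := mstar_ge0 ysel_max ksel_max h W x.
have [c3 | not_c3] := boolP (case3 beta ysel h W x y y).
  have /and3P[conf /eqP y_pred _] := c3.
  rewrite /round_slack /loss grad_hinge_dir c3 dot0l eqxx /= subr0 !mulr0 !addr0.
  by rewrite /prob explore_rate_confident // -y_pred eqxx mulr1 mulr0 addr0 /betaK; lra.
rewrite slack_correct //.
set xi := eta * _; set mW := margin W x y.
have -> : forall p : R, 1 - p + (mW - 1 + xi / p) = mW - p + xi / p by move=> p; ring.
rewrite /prob; have [conf | unsure] := ltP beta (mstar W x).
  have y_neq : y != ysel h W x.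
    by apply: contraNneq not_c3 => y_pred; rewrite /case3 conf -y_pred eqxx.
  rewrite explore_rate_confident // (negbTE y_neq) mulr0 add0r.
  exact: slack_arith_confident params conf (margin_not_ystar ysel_max y_neq).
rewrite (explore_rate_unsure h) //; set G := Num.max _ gamma.
have [y_pred | y_neq] := eqVneq y (ysel h W x).
  rewrite mulr1; apply: slack_arith_predicted params m_ge0 unsure _ erefl.
  exact: mstar_ge.
rewrite mulr0 add0r.
apply: (slack_arith_unpredicted params m_ge0 (margin_not_ystar ysel_max y_neq)).
  by rewrite le_max lexx.
by rewrite le_max lexx orbT.
Qed.

End Round.

(* Summing the one-step inequalities along a trajectory telescopes the
   potential ||W - U||^2 / (2 eta); taking expectations with the per-round
   bound gives the regret bound for any gamma in (0, 1]. *)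
Section Regret.
Variables (R : realType) (K d : nat) (X gamma D : R).
Notation M := 'M[R]_(K, d).
Hypothesis K_ge2 : (2 <= K)%N.
Hypothesis X_gt0 : 0 < X.
Hypothesis D_gt0 : 0 < D.
Hypothesis gamma_gt0 : 0 < gamma.
Hypothesis gamma_le1 : gamma <= 1.
Variable env : seq 'I_K -> 'I_K * 'rV[R]_d.
Variable ysel : seq 'I_K -> M -> 'rV[R]_d -> 'I_K.
Variable ksel : seq 'I_K -> M -> 'rV[R]_d -> 'I_K -> 'I_K.
Variable upd : M -> M -> M.
Hypothesis x_bound : forall h, vnorm (env h).2 <= X.
Hypothesis ysel_max : ystar_ok ysel.
Hypothesis ksel_max : ktilde_ok ksel.

Notation beta := (betaK R K).
Notation eta := (gamma * (1 - betaK R K) / (K%:R ^+ 2 * X ^+ 2)).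
Hypothesis upd_min : upd_ok eta D upd.
Variable U : M.
Hypothesis U_in : frob_norm U <= D.

Notation Wt := (Wof beta gamma env ysel ksel upd).
Notation cumloss := (cumloss beta gamma env ysel ksel upd).

Definition potential (V : M) := frob_dot (V - U) (V - U) / (2 * eta).

Definition slack_at h y' := round_slack X gamma ysel ksel h (Wt h) (env h).2 (env h).1 y'.

Lemma eta_gt0 : 0 < eta.
Proof.
have [beta_gt0 beta_le] := beta_params R K_ge2.
have K_pos : 0 < K%:R :> R by rewrite ltr0n K_gt0.
have g_gt0 := gamma_gt0.
by rewrite divr_gt0 ?mulr_gt0 ?exprn_gt0 // subr_gt0; lra.
Qed.

Lemma potential_ge0 V : 0 <= potential V.
Proof. by rewrite divr_ge0 ?dot_ge0 // mulr_ge0 // ltW // eta_gt0. Qed.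

Lemma potential0_le : potential 0 <= D ^+ 2 / (2 * eta).
Proof.
rewrite /potential sub0r dotNl dotNr opprK ler_pM2r; last by rewrite invr_gt0 mulr_gt0 // eta_gt0.
by rewrite -frob_norm_le //; apply: ltW.
Qed.

Lemma Wof_rcons h y' :
  Wt (rcons h y') = upd (Wt h) (grad beta gamma ysel ksel h (Wt h) (env h).2 (env h).1 y').
Proof. by rewrite /Wof rev_rcons /= revK. Qed.

Lemma regret_step h y' :
  (y' != (env h).1)%:R - loss beta gamma ysel h (Wt h) (env h).2 (env h).1 y' U
  <= slack_at h y' + (potential (Wt h) - potential (Wt (rcons h y'))).
Proof.
have sub := loss_subgradient beta ysel ksel_max (ltW gamma_gt0) gamma_le1 h (Wt h) U (env h).2 (env h).1 y'.
set g := grad _ _ _ _ _ _ _ _ _ in sub *.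
have step := proj_step (Wt h) g eta_gt0 (ltW D_gt0) upd_min U_in.
rewrite Wof_rcons -/g /potential /slack_at /round_slack -/g -mulrBl.
rewrite -opprB dotNr in sub; lra.
Qed.

Lemma mistakes_le_pathwise n (s : n.-tuple 'I_K) :
  mistakes env s <= cumloss U s + potential 0 + round_sum slack_at s.
Proof.
pose F t := potential (Wt (take t s)).
have telescope : \sum_(t < n) (F t - F t.+1) = F 0%N - F n.
  rewrite -(big_mkord xpredT (fun t => F t - F t.+1)).
  by rewrite (eq_bigr (fun t => - (F t.+1 - F t))) => [|t _]; rewrite ?sumrN ?telescope_sumr // opprB.
have F0 : F 0%N = potential 0 by rewrite /F take0.
have Fn_ge0 : 0 <= F n by apply: potential_ge0.
suff : mistakes env s - cumloss U s <= round_sum slack_at s + \sum_(t < n) (F t - F t.+1).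
  by rewrite telescope F0; lra.
rewrite /mistakes /cumloss /round_sum -sumrB -big_split; apply: ler_sum => t _.
have take_succ : take t.+1 s = rcons (take t s) (tnth s t).
  by rewrite (take_nth (tnth s t)) ?size_tuple // -tnth_nth.
rewrite /F take_succ; exact: regret_step.
Qed.

Lemma expected_mistakes_le n :
  expect beta gamma env ysel ksel upd (@mistakes R K d env n)
  <= expect beta gamma env ysel ksel upd (cumloss (T:=n) U)
     + potential 0 + n%:R * (gamma * (1 - beta)).
Proof.
have gamma_ge0 := ltW gamma_gt0; have K_pos := K_gt0 K_ge2.
have slack_mean h : \sum_y pred_prob beta gamma env ysel ksel upd h y * slack_at h y
    <= gamma * (1 - beta).
  exact: (round_bound K_ge2 gamma_gt0 gamma_le1 ysel_max ksel_max h (Wt h) (env h).1 X_gt0 (x_bound h)).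
have := expect_round_sum_le K_pos gamma_ge0 gamma_le1 n slack_mean.
rewrite /expect => slack_sum.
apply: le_trans (_ : \sum_s traj_prob beta gamma env ysel ksel upd s
    * (cumloss U s + potential 0 + round_sum slack_at s) <= _).
  apply: ler_sum => s _; apply: ler_wpM2l; first exact: traj_prob_ge0.
  exact: mistakes_le_pathwise.
under eq_bigr do rewrite !mulrDr.
rewrite !big_split /= -mulr_suml traj_prob_sum // mul1r.
by rewrite lerD2l.
Qed.

End Regret.

Lemma tuned_tradeoff (R : realType) (A c : R) : 0 < A -> 0 < c ->
  A / (2 * Num.min 1 (Num.sqrt (A / (2 * c)))) + c * Num.min 1 (Num.sqrt (A / (2 * c)))
  <= Num.max A (Num.sqrt (2 * A * c)).
Proof.
move=> A_gt0 c_gt0; set w := Num.sqrt _.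
have w_gt0 : 0 < w by rewrite sqrtr_gt0 divr_gt0 ?mulr_gt0.
have w_sqr : w ^+ 2 = A / (2 * c) by rewrite sqr_sqrtr // ltW // divr_gt0 ?mulr_gt0.
have A_eq : A = 2 * c * w ^+ 2 by rewrite w_sqr; field; rewrite gt_eqF.
rewrite le_max; have [w_ge1 | w_lt1] := leP 1 w.
  (* g = 1 and c <= A / 2 *)
  apply/orP; left.
  have w2_ge1 : 1 * 1 <= w ^+ 2 by rewrite expr2; apply: ler_pM; rewrite ?ler01.
  have := ler_wpM2l (ltW c_gt0) w2_ge1; rewrite A_eq; lra.
(* g = w balances the two terms: both equal c w, and (2 c w)^2 = 2 A c *)
apply/orP; right.
have -> : A / (2 * w) + c * w = 2 * c * w by rewrite A_eq; field; rewrite gt_eqF.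
have cw_ge0 : 0 <= 2 * c * w by apply: mulr_ge0; [apply: mulr_ge0|]; apply: ltW.
rewrite -(ger0_norm cw_ge0) -sqrtr_sqr A_eq le_eqVlt; apply/orP; left.
by apply/eqP; congr Num.sqrt; ring.
Qed.

Lemma gammaT_bounds (R : realType) (K T : nat) (X D : R) :
  (2 <= K)%N -> (1 <= T)%N -> 0 < X -> 0 < D ->
  0 < gammaT K T X D /\ gammaT K T X D <= 1.
Proof.
move=> K_ge2 T_ge1 X_gt0 D_gt0; have [beta_gt0 beta_le] := beta_params R K_ge2.
have K_gt1 : 1 < K%:R :> R by rewrite ltr1n.
split; last by rewrite ge_min lexx.
have K_pos := K_gt0 K_ge2.
by rewrite lt_min ltr01 sqrtr_gt0 divr_gt0 ?mulr_gt0 ?exprn_gt0 ?ltr0n //; lra.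
Qed.

(* The bound D^2 / (2 eta) + T gamma (1 - beta) of the regret analysis, with the
   tuned parameters, is the trade-off above for A = K^3 X^2 D^2 / (K - 1) and
   c = T (K - 1) / K. *)
Lemma tuned_bound (R : realType) (K T : nat) (X D : R) :
  (2 <= K)%N -> (1 <= T)%N -> 0 < X -> 0 < D ->
  D ^+ 2 / (2 * etaT K T X D) + T%:R * (gammaT K T X D * (1 - betaK R K))
  <= Num.max (K%:R ^+ 3 * X ^+ 2 * D ^+ 2 / (K%:R - 1))
             (2 * K%:R * X * D * Num.sqrt (T%:R / 2)).
Proof.
move=> K_ge2 T_ge1 X_gt0 D_gt0.
have [g_gt0 _] := gammaT_bounds K_ge2 T_ge1 X_gt0 D_gt0.
have K_gt1 : 1 < K%:R :> R by rewrite ltr1n.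
have T_gt0 : 0 < T%:R :> R by rewrite ltr0n.
have K_neq0 : K%:R != 0 :> R by rewrite gt_eqF // (lt_trans ltr01).
have K1_neq0 : K%:R - 1 != 0 :> R by rewrite subr_eq0 gt_eqF.
set A := K%:R ^+ 3 * X ^+ 2 * D ^+ 2 / (K%:R - 1).
pose c : R := T%:R * (K%:R - 1) / K%:R.
have A_gt0 : 0 < A by rewrite divr_gt0 ?mulr_gt0 ?exprn_gt0 ?subr_gt0 // (lt_trans ltr01).
have c_gt0 : 0 < c by rewrite divr_gt0 ?mulr_gt0 ?subr_gt0 // (lt_trans ltr01).
have gamma_eq : gammaT K T X D = Num.min 1 (Num.sqrt (A / (2 * c))).
  rewrite /gammaT /betaK; congr (Num.min 1 (Num.sqrt _)); rewrite /A /c.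
  by field; rewrite K_neq0 K1_neq0 gt_eqF.
have -> : D ^+ 2 / (2 * etaT K T X D) + T%:R * (gammaT K T X D * (1 - betaK R K))
    = A / (2 * gammaT K T X D) + c * gammaT K T X D.
  rewrite /etaT /betaK /A /c; field.
  by rewrite K_neq0 K1_neq0 !gt_eqF.
have -> : 2 * K%:R * X * D * Num.sqrt (T%:R / 2) = Num.sqrt (2 * A * c).
  have -> : 2 * A * c = (2 * K%:R * X * D) ^+ 2 * (T%:R / 2).
    by rewrite /A /c; field; rewrite K_neq0 K1_neq0.
  have K_gt0 : 0 < K%:R :> R by apply: lt_trans K_gt1.
  rewrite (sqrtrM _ (sqr_ge0 _)) sqrtr_sqr ger0_norm //.
  by apply: mulr_ge0; [apply: mulr_ge0; [apply: mulr_ge0|] |]; apply: ltW.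
by rewrite gamma_eq; apply: tuned_tradeoff.
Qed.

Unset Implicit Arguments. Set Strict Implicit.

Theorem theorem5 (R : realType) (K d T : nat) (X D : R)
  (env : seq 'I_K -> 'I_K * 'rV[R]_d)
  (ysel : seq 'I_K -> 'M[R]_(K, d) -> 'rV[R]_d -> 'I_K)
  (ksel : seq 'I_K -> 'M[R]_(K, d) -> 'rV[R]_d -> 'I_K -> 'I_K)
  (upd : 'M[R]_(K, d) -> 'M[R]_(K, d) -> 'M[R]_(K, d)) :
  (2 <= K)%N -> (1 <= d)%N -> (1 <= T)%N -> 0 < X -> 0 < D ->
  (forall h, vnorm (env h).2 <= X) ->
  ystar_ok ysel -> ktilde_ok ksel ->
  upd_ok (etaT K T X D) D upd ->
  forall U : 'M[R]_(K, d), frob_norm U <= D ->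
  expect (betaK R K) (gammaT K T X D) env ysel ksel upd (@mistakes R K d env T)
  <= expect (betaK R K) (gammaT K T X D) env ysel ksel upd
       (@cumloss R K d (betaK R K) (gammaT K T X D) env ysel ksel upd T U)
     + Num.max (K%:R ^+ 3 * X ^+ 2 * D ^+ 2 / (K%:R - 1))
               (2 * K%:R * X * D * Num.sqrt (T%:R / 2)).
Proof.
move=> K_ge2 _ T_ge1 X_gt0 D_gt0 x_bound ysel_max ksel_max upd_min U U_in.
have [gamma_gt0 gamma_le1] := gammaT_bounds K_ge2 T_ge1 X_gt0 D_gt0.
have regret := expected_mistakes_le K_ge2 X_gt0 D_gt0 gamma_gt0 gamma_le1
  x_bound ysel_max ksel_max upd_min U_in T.
have potential0 := potential0_le K_ge2 X_gt0 D_gt0 gamma_gt0 U_in.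
have tuning := tuned_bound K_ge2 T_ge1 X_gt0 D_gt0.
apply: (le_trans regret); rewrite -addrA lerD2l.
by apply: le_trans tuning; rewrite lerD2r.
Qed.
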